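(* Under the setting and assumptions in the context, fix a client $i$ and weights $\boldsymbol\alpha_i=(\alpha_{i1},\dots,\alpha_{im})\in\mathbb R^m$ with $\sum_{j=1}^m\alpha_{ij}=1$. Let $\hat{\mathbf g}_j$ be the empirical classifier of client $j$, $\mathbf g_j:=\mathbb E[\hat{\mathbf g}_j]$, and $\hat{\mathbf g}_i^*:=\sum_{j=1}^m\alpha_{ij}\hat{\mathbf g}_j$. Define the testing loss $R_i(\boldsymbol\alpha_i):=\mathbb E\big[\chi^2_i\big(P^{(i)}_{XY},P_XQ_{Y|X}(\hat{\mathbf g}^*_i)\big)\big]$ and $V_j:=n_j\,\mathbb E\big[\chi^2_i\big(P_XQ_{Y|X}(\hat{\mathbf g}_j),P_XQ_{Y|X}(\mathbf g_j)\big)\big]$. Then $$R_i(\boldsymbol\alpha_i)=\chi^2_i\Big(P_XQ_{Y|X}(\mathbf g_i),\sum_{j=1}^m\alpha_{ij}P_XQ_{Y|X}(\mathbf g_j)\Big)+\sum_{j=1}^m\frac{\alpha_{ij}^2}{n_j}V_j+\chi^2_i\big(P^{(i)}_{XY},P_XQ_{Y|X}(\mathbf g_i)\big),$$ which is a quadratic function of $\boldsymbol\alpha_i$; here $V_j$ does not depend on $\boldsymbol\alpha_i$.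
   Context: Let $\mathcal X$ be a finite input space and $\mathcal Y$ a finite label set with $|\mathcal Y|=K$. Let $\mathbf f:\mathcal X\to\mathbb R^d$ be a fixed feature map. For a function $\mathbf g:\mathcal Y\to\mathbb R^d$ define the model $Q_{Y|X}(y|x;\mathbf g)=\frac1K\big(1+\mathbf f(x)^\top\mathbf g(y)\big)$. There are $m$ clients; client $j$ has a true joint distribution $P^{(j)}_{XY}$ on $\mathcal X\times\mathcal Y$. Standing assumptions: (A1) $P^{(j)}_X=P_X$ for all $j$, with $P_X(x)>0$ for all $x$; (A2) $\mathbb E_{P_X}[\mathbf f(X)]=\mathbf 0$; (A3) $\Lambda:=\mathbb E_{P_X}[\mathbf f(X)\mathbf f(X)^\top]$ is invertible. Client $j$ holds $n_j$ i.i.d. samples from $P^{(j)}_{XY}$, samples of different clients being independent; $\hat P^{(j)}_{XY}$ is the resulting empirical distribution and $\mathbb E$ denotes expectation over sampling. The $\chi^2_i$-distance is $\chi^2_i(P,Q)=\sum_{x,y}\frac{(P(x,y)-Q(x,y))^2}{P^{(i)}_X(x)}$ (applied to arbitrary real functions on $\mathcal X\times\mathcal Y$), and $P_XQ_{Y|X}(\mathbf g)$ denotes $(x,y)\mapsto P_X(x)Q_{Y|X}(y|x;\mathbf g)$. The empirical classifier of client $j$ is $\hat{\mathbf g}_j:=\arg\min_{\mathbf g:\mathcal Y\to\mathbb R^d}\chi^2_j\big(\hat P^{(j)}_{XY},P_XQ_{Y|X}(\mathbf g)\big)$ (which exists and is unique under (A1)-(A3)). *)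

From HB Require Import structures.
From mathcomp Require Import all_boot all_order all_algebra.
From mathcomp Require Import reals.
Set Implicit Arguments. Unset Strict Implicit. Unset Printing Implicit Defensive.
Import Order.TTheory GRing.Theory Num.Theory.
Local Open Scope ring_scope.

Section Defs.
Variables (R : realType) (X Y : finType) (d : nat).

Definition dotv (u v : 'rV[R]_d) : R := \sum_(k < d) u 0 k * v 0 k.

Definition Qmodel (f : X -> 'rV[R]_d) (g : Y -> 'rV[R]_d) (x : X) (y : Y) : R :=
  (1 + dotv (f x) (g y)) / #|Y|%:R.

Definition PXQ (PX : X -> R) (f : X -> 'rV[R]_d) (g : Y -> 'rV[R]_d) : X -> Y -> R :=
  fun x y => PX x * Qmodel f g x y.

Definition marginal (P : X -> Y -> R) (x : X) : R := \sum_(y : Y) P x y.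

(* chi^2_i(A, B) = sum_{x,y} (A(x,y) - B(x,y))^2 / P^{(i)}_X(x), Pi = P^{(i)}_{XY} *)
Definition chi2 (Pi : X -> Y -> R) (A B : X -> Y -> R) : R :=
  \sum_(x : X) \sum_(y : Y) (A x y - B x y) ^+ 2 / marginal Pi x.

Definition emp_dist (nj : nat) (s : {ffun 'I_nj -> X * Y}) (x : X) (y : Y) : R :=
  (\sum_(k < nj) ((s k == (x, y)) : nat)%:R) / nj%:R.

Variables (m : nat) (n : 'I_m -> nat).

Definition sample_space := {dffun forall j : 'I_m, {ffun 'I_(n j) -> X * Y}}.

Definition sample_prob (P : 'I_m -> X -> Y -> R) (S : sample_space) : R :=
  \prod_(j < m) \prod_(k < n j) P j (S j k).1 (S j k).2.

Definition expect (P : 'I_m -> X -> Y -> R) (F : sample_space -> R) : R :=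
  \sum_(S : sample_space) sample_prob P S * F S.

Definition expect_vec (P : 'I_m -> X -> Y -> R) (F : sample_space -> 'rV[R]_d)
  : 'rV[R]_d :=
  \sum_(S : sample_space) sample_prob P S *: F S.

End Defs.

From mathcomp Require Import all_boot all_order all_algebra.
From mathcomp Require Import reals.
From mathcomp Require Import ring.
Set Implicit Arguments. Unset Strict Implicit. Unset Printing Implicit Defensive.
Import Order.TTheory GRing.Theory Num.Theory.
Local Open Scope ring_scope.

(* Write qhat S j = P_X Q(ghat_j), qbar j = P_X Q(gbar_j) and
   qmix = sum_j alpha_j qbar j.  Since the model g |-> P_X Q(g) is affine,
   P^(i) - P_X Q(ghat*_i) = (P^(i) - qmix) + sum_j alpha_j (qbar j - qhat S j).
   The fluctuations qbar j - qhat S j are centred, and uncorrelated across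
   clients: samples of different clients are independent and, the
   chi^2-projection being unique under (A1) and (A3), ghat_j depends on the
   sample of client j only.  Hence E[loss] = chi^2(P^(i), qmix) + sum of the
   alpha_j^2-weighted variances.  Finally, averaging the first-order condition
   of the empirical projection (the empirical distribution being unbiased) shows
   that P^(i) - qbar i is chi^2-orthogonal to the model, so Pythagoras splits
   chi^2(P^(i), qmix) = chi^2(P^(i), qbar i) + chi^2(qbar i, qmix). *)

Lemma sum_dffun_prod (R : comNzRingType) (I : finType) (T_ : I -> finType)
    (G : forall i, T_ i -> R) :
  \sum_(S : {dffun forall i, T_ i}) \prod_i G i (S i) = \prod_i \sum_(s : T_ i) G i s.
Proof.
rewrite (reindex (@dffun_of_fprod I T_)); last exact/onW_bij/dffun_of_fprod_bij.
have prodE (t : fprod T_) :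
    \prod_i G i (dffun_of_fprod t i) = \prod_i [ffun s => G i s] (t i).
  by apply: eq_bigr => i _; rewrite !ffunE.
have sumE i : \sum_(s : T_ i) G i s = \sum_(s : T_ i) [ffun s => G i s] s.
  by apply: eq_bigr => s _; rewrite ffunE.
rewrite (eq_bigr _ (fun t _ => prodE t)) (@big_fprod R 0 1 *%R _ I T_ (fun i => [ffun s => G i s])).
rewrite (eq_bigr _ (fun i _ => sumE i)).
rewrite (eq_bigr _ (fun i _ => big_tag (op:=+%R) (fun i => [ffun s => G i s]) i)).
by rewrite bigA_distr_big_dep; apply: eq_bigr.
Qed.

Section ProductExpectation.
Variables (R : comNzRingType) (I : finType) (T_ : I -> finType).
Variable w : forall i, T_ i -> R.
Arguments w : clear implicits.
Hypothesis w_total : forall i, \sum_(s : T_ i) w i s = 1.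

Definition prodw (S : {dffun forall i, T_ i}) : R := \prod_i w i (S i).

Lemma expect_prod_on (A : pred I) (F : forall i, T_ i -> R) :
  \sum_(S : {dffun forall i, T_ i}) prodw S * \prod_(i | A i) F i (S i)
  = \prod_(i | A i) \sum_(s : T_ i) w i s * F i s.
Proof.
pose F' i (s : T_ i) := w i s * (if A i then F i s else 1).
have -> : \prod_(i | A i) \sum_s w i s * F i s = \prod_i \sum_s F' i s.
  rewrite [RHS](bigID A) /= [X in _ * X]big1 ?mulr1 => [|i /negbTE Ai].
    by apply: eq_bigr => i Ai; apply: eq_bigr => s _; rewrite /F' Ai.
  by rewrite -[RHS](w_total i); apply: eq_bigr => s _; rewrite /F' Ai mulr1.
rewrite -sum_dffun_prod; apply: eq_bigr => S _.
rewrite /prodw /F' big_split /=; congr (_ * _).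
rewrite [RHS](bigID A) /= [X in _ * X]big1 => [|i /negbTE -> //].
by rewrite mulr1; apply: eq_bigr => i ->.
Qed.

Lemma prodw_total : \sum_(S : {dffun forall i, T_ i}) prodw S = 1.
Proof.
have := expect_prod_on pred0 (fun _ _ => 0).
by rewrite !big_pred0_eq => <-; apply: eq_bigr => S _; rewrite mulr1.
Qed.

Lemma expect_coord (j : I) (F : forall i, T_ i -> R) :
  \sum_(S : {dffun forall i, T_ i}) prodw S * F j (S j) = \sum_(s : T_ j) w j s * F j s.
Proof.
have := expect_prod_on (pred1 j) F; rewrite !big_pred1_eq => <-.
by apply: eq_bigr => S _; rewrite big_pred1_eq.
Qed.

Lemma expect_coord2 (j k : I) (F : forall i, T_ i -> R) : j != k ->
  \sum_(S : {dffun forall i, T_ i}) prodw S * (F j (S j) * F k (S k))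
  = (\sum_(s : T_ j) w j s * F j s) * (\sum_(s : T_ k) w k s * F k s).
Proof.
move=> jk.
have prod_pair (G : I -> R) : \prod_(i | pred2 j k i) G i = G j * G k.
  rewrite (bigD1 j) /= ?eqxx //; congr (_ * _); apply: big_pred1 => i /=.
  by case: (eqVneq i j) => [->|ij] /=; rewrite ?eqxx ?(negbTE jk) ?andbT.
have := expect_prod_on (pred2 j k) F; rewrite prod_pair => <-.
by apply: eq_bigr => S _; rewrite prod_pair.
Qed.

End ProductExpectation.

Section IidSample.
Variables (R : realType) (X Y : finType) (Q : X -> Y -> R) (N : nat).
Hypothesis Q_total : \sum_x \sum_y Q x y = 1.

Definition iid_weight (s : {ffun 'I_N -> X * Y}) : R := \prod_k Q (s k).1 (s k).2.

Lemma pair_total : \sum_(z : X * Y) Q z.1 z.2 = 1.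
Proof. by rewrite -Q_total pair_bigA. Qed.

Lemma iid_weight_total : \sum_s iid_weight s = 1.
Proof.
by apply: (prodw_total (w := fun _ (z : X * Y) => Q z.1 z.2)) => k; apply: pair_total.
Qed.

Lemma expect_emp_dist x y : (0 < N)%N ->
  \sum_s iid_weight s * emp_dist R s x y = Q x y.
Proof.
move=> N_gt0; pose hit (k : 'I_N) (z : X * Y) : R := ((z == (x, y)) : nat)%:R.
have hit_mean k : \sum_s iid_weight s * hit k (s k) = Q x y.
  rewrite (expect_coord (w := fun _ (z : X * Y) => Q z.1 z.2)) => [|l]; last exact: pair_total.
  rewrite (bigD1 (x, y)) //= big1 => [|z /negbTE zxy]; last by rewrite /hit zxy mulr0.
  by rewrite /hit eqxx mulr1 addr0.
under eq_bigr do rewrite /emp_dist mulrA mulr_sumr.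
rewrite -mulr_suml exchange_big /= (eq_bigr _ (fun k _ => hit_mean k)).
by rewrite big_const_ord iter_addr addr0 -[_ *+ N]mulr_natr mulfK // pnatr_eq0 -lt0n.
Qed.

End IidSample.

(* A real quadratic t |-> -2 t b + t^2 C that is nonnegative everywhere has
   no linear term; this is the first-order condition at a minimum. *)
Lemma nonneg_quadratic_linear_coef (R : realFieldType) (b C : R) :
  0 <= C -> (forall t, 0 <= - (2 * t) * b + t ^+ 2 * C) -> b = 0.
Proof.
move=> C_ge0 nonneg; have := nonneg (b / (C + 1)).
have C1_gt0 : 0 < C + 1 by rewrite ltr_wpDl.
have -> : - (2 * (b / (C + 1))) * b + (b / (C + 1)) ^+ 2 * C
          = - (b ^+ 2 * (C + 2)) / (C + 1) ^+ 2.
  by field; rewrite gt_eqF.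
rewrite pmulr_lge0 ?invr_gt0 ?exprn_gt0 // oppr_ge0 => le0.
have /eqP : b ^+ 2 * (C + 2) = 0.
  by apply/eqP; rewrite eq_le le0 mulr_ge0 ?sqr_ge0 ?addr_ge0.
have C2_gt0 : 0 < C + 2 by rewrite ltr_wpDl.
by rewrite mulf_eq0 sqrf_eq0 (gt_eqF C2_gt0) orbF => /eqP.
Qed.

Section LinearModel.
Variables (R : realType) (X Y : finType) (d : nat).
Variables (f : X -> 'rV[R]_d) (PX : X -> R).

Lemma dotvD (u a b : 'rV[R]_d) : dotv u (a + b) = dotv u a + dotv u b.
Proof. by rewrite /dotv -big_split; apply: eq_bigr => k _; rewrite mxE mulrDr. Qed.

Lemma dotvZ (u a : 'rV[R]_d) c : dotv u (c *: a) = c * dotv u a.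
Proof. by rewrite /dotv mulr_sumr; apply: eq_bigr => k _; rewrite mxE mulrCA. Qed.

Lemma dotvB (u a b : 'rV[R]_d) : dotv u (a - b) = dotv u a - dotv u b.
Proof. by rewrite dotvD -scaleN1r dotvZ mulN1r. Qed.

Lemma dotv_sumZ (I : finType) (c : I -> R) (v : I -> 'rV[R]_d) (u : 'rV[R]_d) :
  dotv u (\sum_i c i *: v i) = \sum_i c i * dotv u (v i).
Proof.
rewrite /dotv; under eq_bigr do rewrite summxE mulr_sumr.
rewrite exchange_big /=; apply: eq_bigr => i _; rewrite mulr_sumr.
by apply: eq_bigr => k _; rewrite mxE mulrCA.
Qed.

Lemma PXQ_affine (T : finType) (c : T -> R) (g : T -> Y -> 'rV[R]_d) x y :
  \sum_t c t = 1 ->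
  PXQ PX f (fun y => \sum_t c t *: g t y) x y = \sum_t c t * PXQ PX f (g t) x y.
Proof.
move=> c_total; rewrite /PXQ /Qmodel dotv_sumZ.
have -> : 1 + \sum_t c t * dotv (f x) (g t y) = \sum_t c t * (1 + dotv (f x) (g t y)).
  by under [RHS]eq_bigr do rewrite mulrDr mulr1; rewrite big_split /= c_total.
by rewrite mulr_suml mulr_sumr; apply: eq_bigr => t _; ring.
Qed.

Lemma PXQ_diff (g1 g2 : Y -> 'rV[R]_d) x y :
  PXQ PX f g1 x y - PXQ PX f g2 x y = PX x / #|Y|%:R * dotv (f x) (g1 y - g2 y).
Proof. by rewrite /PXQ /Qmodel dotvB; ring. Qed.

Lemma chi2_minimizer_orthogonal (Pj e : X -> Y -> R) (g : Y -> 'rV[R]_d) :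
  (forall x, marginal Pj x = PX x) -> (forall x, 0 < PX x) ->
  (forall g', chi2 Pj e (PXQ PX f g) <= chi2 Pj e (PXQ PX f g')) ->
  forall h, \sum_x \sum_y (e x y - PXQ PX f g x y) * dotv (f x) (h y) = 0.
Proof.
move=> marg PX_gt0 is_min h.
have [Y0|Y_gt0] := posnP #|Y|.
  apply: big1 => x _; apply: big1 => y _.
  have : (0 < #|Y|)%N by apply/card_gt0P; exists y.
  by rewrite Y0.
pose K : R := #|Y|%:R; have K_neq0 : K != 0 by rewrite pnatr_eq0 -lt0n.
pose r x y := e x y - PXQ PX f g x y.
pose w x y := PX x / K * dotv (f x) (h y).
set B := \sum_x _.
pose C := \sum_x \sum_y w x y ^+ 2 / PX x.
have C_ge0 : 0 <= C.
  by do 2![apply: sumr_ge0 => ? _]; rewrite divr_ge0 ?sqr_ge0 ?ltW.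
have expand t : chi2 Pj e (PXQ PX f (fun y => g y + t *: h y)) - chi2 Pj e (PXQ PX f g)
                = - (2 * t) * (B / K) + t ^+ 2 * C.
  rewrite /chi2 -sumrB mulr_suml !mulr_sumr -big_split /=; apply: eq_bigr => x _.
  rewrite -sumrB mulr_suml !mulr_sumr -big_split /=; apply: eq_bigr => y _.
  rewrite marg /w /PXQ /Qmodel dotvD dotvZ -/K.
  by field; rewrite K_neq0 gt_eqF.
suff /eqP : B / K = 0 by rewrite mulf_eq0 invr_eq0 (negbTE K_neq0) orbF => /eqP.
by apply: (nonneg_quadratic_linear_coef C_ge0) => t; rewrite -expand subr_ge0.
Qed.

Lemma orthogonal_features_eq0 (D : 'rV[R]_d) :
  (\sum_(x : X) PX x *: ((f x)^T *m f x)) \in unitmx ->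
  (forall x, dotv (f x) D = 0) -> D = 0.
Proof.
move=> Lambda_unit orthD.
have fD x : f x *m D^T = 0.
  apply/matrixP => a b; rewrite !mxE (ord1 a) (ord1 b) -[RHS](orthD x).
  by apply: eq_bigr => k _; rewrite mxE.
have LambdaD : (\sum_(x : X) PX x *: ((f x)^T *m f x)) *m D^T = 0.
  rewrite mulmx_suml big1 // => x _.
  by rewrite -scalemxAl -mulmxA fD mulmx0 scaler0.
have : D^T = 0 by rewrite -(mulKmx Lambda_unit D^T) LambdaD mulmx0.
by move/(congr1 trmx); rewrite trmxK trmx0.
Qed.

Lemma chi2_minimizer_unique (Pj e : X -> Y -> R) (g1 g2 : Y -> 'rV[R]_d) :
  (forall x, marginal Pj x = PX x) -> (forall x, 0 < PX x) ->
  (\sum_(x : X) PX x *: ((f x)^T *m f x)) \in unitmx ->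
  (forall g', chi2 Pj e (PXQ PX f g1) <= chi2 Pj e (PXQ PX f g')) ->
  (forall g', chi2 Pj e (PXQ PX f g2) <= chi2 Pj e (PXQ PX f g')) ->
  g1 =1 g2.
Proof.
move=> marg PX_gt0 Lambda_unit min1 min2 y0.
pose h y := g2 y - g1 y.
have K_gt0 : 0 < #|Y|%:R :> R by rewrite ltr0n; apply/card_gt0P; exists y0.
pose sq x y := PX x / #|Y|%:R * dotv (f x) (h y) ^+ 2.
have sq_ge0 x y : 0 <= sq x y by rewrite mulr_ge0 ?sqr_ge0 ?divr_ge0 ?ltW.
(* Subtracting the two first-order conditions gives E[(f^T h)^2] = 0. *)
have sq_sum0 : \sum_x \sum_y sq x y = 0.
  transitivity (\sum_x \sum_y (e x y - PXQ PX f g1 x y) * dotv (f x) (h y)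
              - \sum_x \sum_y (e x y - PXQ PX f g2 x y) * dotv (f x) (h y)); last first.
    by rewrite (chi2_minimizer_orthogonal marg PX_gt0 min1)
               (chi2_minimizer_orthogonal marg PX_gt0 min2) subrr.
  rewrite -sumrB; apply: eq_bigr => x _; rewrite -sumrB; apply: eq_bigr => y _.
  rewrite -mulrBl (_ : e x y - _ - _ = PXQ PX f g2 x y - PXQ PX f g1 x y); last by ring.
  by rewrite PXQ_diff /sq expr2 mulrA.
have orth_h x y : dotv (f x) (h y) = 0.
  move/eqP: sq_sum0; rewrite psumr_eq0 => [/allP/(_ x (mem_index_enum x))|]; last first.
    by move=> x' _; apply: sumr_ge0 => y' _.
  rewrite psumr_eq0 // => /allP/(_ y (mem_index_enum y)) /=.
  by rewrite /sq !mulf_eq0 invr_eq0 (gt_eqF (PX_gt0 x)) (gt_eqF K_gt0) /= orbb => /eqP.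
have : h y0 = 0 by apply: orthogonal_features_eq0 => // x; apply: orth_h.
by move/eqP; rewrite subr_eq0 eq_sym => /eqP.
Qed.

End LinearModel.

Lemma expect_sq_uncorrelated (R : comNzRingType) (T I : finType) (p : T -> R)
    (c : I -> T -> R) (alpha : I -> R) (u : R) :
  \sum_S p S = 1 -> (forall j, \sum_S p S * c j S = 0) ->
  (forall j k, j != k -> \sum_S p S * (c j S * c k S) = 0) ->
  \sum_S p S * (u + \sum_j alpha j * c j S) ^+ 2 =
    u ^+ 2 + \sum_j alpha j ^+ 2 * \sum_S p S * c j S ^+ 2.
Proof.
move=> p_total centred uncorrelated.
have expand S : p S * (u + \sum_j alpha j * c j S) ^+ 2 =
    p S * u ^+ 2 + (2 * u) * (\sum_j alpha j * (p S * c j S))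
    + \sum_j \sum_k (alpha j * alpha k) * (p S * (c j S * c k S)).
  rewrite sqrrD [(\sum_j _) ^+ 2]expr2 big_distrlr /= mulrDr mulrDr.
  congr (_ + _ + _).
    have -> : \sum_j alpha j * (p S * c j S) = p S * \sum_j alpha j * c j S.
      by rewrite mulr_sumr; apply: eq_bigr => j _; ring.
    by rewrite -mulr_natr; ring.
  by rewrite mulr_sumr; apply: eq_bigr => j _; rewrite mulr_sumr; apply: eq_bigr => k _; ring.
rewrite (eq_bigr _ (fun S _ => expand S)) !big_split /=.
rewrite -mulr_suml p_total mul1r -mulr_sumr exchange_big /=.
rewrite (eq_bigr (fun _ => 0)) => [|j _]; last by rewrite -mulr_sumr centred mulr0.
rewrite big1_eq mulr0 addr0; congr (_ + _).
rewrite exchange_big /=; apply: eq_bigr => j _.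
rewrite exchange_big /= (bigD1 j) //= [X in _ + X]big1 ?addr0 => [|k kj]; last first.
  by rewrite -mulr_sumr uncorrelated ?mulr0 // eq_sym.
by rewrite -mulr_sumr expr2; congr (_ * _); apply: eq_bigr => S _; rewrite expr2.
Qed.

Lemma chi2_pythagoras (R : realType) (X Y : finType) (Pi A B C : X -> Y -> R) :
  \sum_x \sum_y (A x y - B x y) * (B x y - C x y) / marginal Pi x = 0 ->
  chi2 Pi A C = chi2 Pi A B + chi2 Pi B C.
Proof.
move=> orth.
transitivity (chi2 Pi A B + chi2 Pi B C
  + 2 * \sum_x \sum_y (A x y - B x y) * (B x y - C x y) / marginal Pi x);
  last by rewrite orth mulr0 addr0.
rewrite /chi2 mulr_sumr -!big_split /=; apply: eq_bigr => x _.
by rewrite mulr_sumr -!big_split /=; apply: eq_bigr => y _; ring.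
Qed.

Lemma expect_chi2 (R : realType) (X Y T : finType) (p : T -> R)
    (Pi : X -> Y -> R) (A B : T -> X -> Y -> R) :
  \sum_S p S * chi2 Pi (A S) (B S)
  = \sum_x \sum_y (\sum_S p S * (A S x y - B S x y) ^+ 2) / marginal Pi x.
Proof.
under eq_bigr do rewrite /chi2 mulr_sumr.
rewrite exchange_big /=; apply: eq_bigr => x _.
under eq_bigr do rewrite mulr_sumr.
rewrite exchange_big /=; apply: eq_bigr => y _.
by rewrite mulr_suml; apply: eq_bigr => S _; rewrite mulrA.
Qed.

Section Federated.
Variables (R : realType) (X Y : finType) (d m : nat).
Variables (f : X -> 'rV[R]_d) (PX : X -> R) (P : 'I_m -> X -> Y -> R).
Variables (n : 'I_m -> nat) (ghat : sample_space X Y n -> 'I_m -> Y -> 'rV[R]_d).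
Hypothesis P_total : forall j, \sum_x \sum_y P j x y = 1.
Hypothesis P_marginal : forall j x, marginal (P j) x = PX x.
Hypothesis PX_gt0 : forall x, 0 < PX x.
Hypothesis Lambda_unit : (\sum_(x : X) PX x *: ((f x)^T *m f x)) \in unitmx.
Hypothesis n_gt0 : forall j, (0 < n j)%N.
Hypothesis ghat_min : forall (S : sample_space X Y n) j (g : Y -> 'rV[R]_d),
  chi2 (P j) (emp_dist R (S j)) (PXQ PX f (ghat S j))
  <= chi2 (P j) (emp_dist R (S j)) (PXQ PX f g).

Let client_sample (j : 'I_m) : finType := {ffun 'I_(n j) -> X * Y}.
Let client_total j : \sum_(s : client_sample j) iid_weight (P j) s = 1.
Proof. exact: iid_weight_total. Qed.

Lemma sample_total : \sum_(S : sample_space X Y n) sample_prob P S = 1.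
Proof. exact: (prodw_total client_total). Qed.

Lemma expect_client j (F : forall l, {ffun 'I_(n l) -> X * Y} -> R) :
  \sum_(S : sample_space X Y n) sample_prob P S * F j (S j)
  = \sum_s iid_weight (P j) s * F j s.
Proof. exact: (expect_coord client_total). Qed.

Lemma expect_clients j k (F : forall l, {ffun 'I_(n l) -> X * Y} -> R) : j != k ->
  \sum_(S : sample_space X Y n) sample_prob P S * (F j (S j) * F k (S k))
  = (\sum_s iid_weight (P j) s * F j s) * (\sum_s iid_weight (P k) s * F k s).
Proof. exact: (expect_coord2 client_total). Qed.

Definition gbar (j : 'I_m) (y : Y) : 'rV[R]_d := expect_vec P (fun S => ghat S j y).
Definition qbar (j : 'I_m) : X -> Y -> R := PXQ PX f (gbar j).
Definition qhat (S : sample_space X Y n) (j : 'I_m) : X -> Y -> R := PXQ PX f (ghat S j).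

Definition fluct (j : 'I_m) (S : sample_space X Y n) (x : X) (y : Y) : R :=
  qbar j x y - qhat S j x y.

(* Since the model is affine, averaging classifiers averages distributions. *)
Lemma expect_qhat j x y : \sum_S sample_prob P S * qhat S j x y = qbar j x y.
Proof. by symmetry; apply: PXQ_affine; exact: sample_total. Qed.

Lemma fluct_centred j x y : \sum_S sample_prob P S * fluct j S x y = 0.
Proof.
under eq_bigr do rewrite mulrBr.
by rewrite sumrB expect_qhat -mulr_suml sample_total mul1r subrr.
Qed.

(* By uniqueness of the chi^2-projection, ghat S j depends on S j only. *)
Lemma ghat_local (S S' : sample_space X Y n) j : S j = S' j -> ghat S j =1 ghat S' j.
Proof.
move=> same_j; apply: (chi2_minimizer_unique (P_marginal j) PX_gt0 Lambda_unit (ghat_min S j)).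
by rewrite same_j; apply: ghat_min.
Qed.

Definition replace_client (S : sample_space X Y n) j (s : {ffun 'I_(n j) -> X * Y})
  : sample_space X Y n :=
  [ffun l => @dfwith _ (fun l => {ffun 'I_(n l) -> X * Y}) (fun l => S l) j s l].

Lemma replace_client_at S j (s : {ffun 'I_(n j) -> X * Y}) : replace_client S s j = s.
Proof. by rewrite ffunE dfwith_in. Qed.

(* Fluctuations of different clients are uncorrelated, the samples being
   independent and each ghat S j depending on S j only. *)
Lemma fluct_uncorrelated j k x y : j != k ->
  \sum_S sample_prob P S * (fluct j S x y * fluct k S x y) = 0.
Proof.
move=> jk; case: (pickP (@predT (sample_space X Y n))) => [S0 _ | no_sample]; last first.
  by apply: big1 => S; have := no_sample S.
pose F l (s : {ffun 'I_(n l) -> X * Y}) := qbar l x y - qhat (replace_client S0 s) l x y.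
have fluctE l S : fluct l S x y = F l (S l).
  rewrite /fluct /F /qhat /PXQ /Qmodel (ghat_local (S' := replace_client S0 (S l))) //.
  by rewrite replace_client_at.
have F_centred l : \sum_s iid_weight (P l) s * F l s = 0.
  rewrite -expect_client -[RHS](fluct_centred l x y).
  by apply: eq_bigr => S _; rewrite fluctE.
under eq_bigr do rewrite !fluctE.
by rewrite expect_clients // F_centred mul0r.
Qed.

(* The bias P j - qbar j is orthogonal to the model: average over the samples
   the first-order condition of each empirical classifier, using that the
   empirical distribution is unbiased. *)
Lemma bias_orthogonal j (h : Y -> 'rV[R]_d) :
  \sum_x \sum_y (P j x y - qbar j x y) * dotv (f x) (h y) = 0.
Proof.
have foc_avg : \sum_S sample_prob P S *
    \sum_x \sum_y (emp_dist R (S j) x y - qhat S j x y) * dotv (f x) (h y) = 0.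
  apply: big1 => S _.
  by rewrite (chi2_minimizer_orthogonal (P_marginal j) PX_gt0 (ghat_min S j)) mulr0.
rewrite -[RHS]foc_avg; under [RHS]eq_bigr do rewrite mulr_sumr.
rewrite [RHS]exchange_big; apply: eq_bigr => x _ /=.
under [RHS]eq_bigr do rewrite mulr_sumr.
rewrite [RHS]exchange_big; apply: eq_bigr => y _ /=.
rewrite -expect_qhat -(expect_emp_dist (P_total j) x y (n_gt0 j)).
rewrite -(expect_client j (fun l s => emp_dist R s x y)) -sumrB mulr_suml.
by apply: eq_bigr => S _; ring.
Qed.

Variables (i : 'I_m) (alpha : 'I_m -> R).
Hypothesis alpha_total : \sum_j alpha j = 1.

Definition ghat_star (S : sample_space X Y n) (y : Y) : 'rV[R]_d :=
  \sum_j alpha j *: ghat S j y.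

Definition qmix (x : X) (y : Y) : R := \sum_j alpha j * qbar j x y.

Lemma residual_split S x y :
  P i x y - PXQ PX f (ghat_star S) x y = (P i x y - qmix x y) + \sum_j alpha j * fluct j S x y.
Proof.
rewrite (PXQ_affine f PX (c := alpha) (fun j => ghat S j)) // /qmix /fluct.
under [X in _ = _ + X]eq_bigr do rewrite mulrBr.
by rewrite sumrB; ring.
Qed.

Lemma expected_risk :
  expect P (fun S => chi2 (P i) (P i) (PXQ PX f (ghat_star S)))
  = chi2 (P i) (P i) qmix
    + \sum_x \sum_y (\sum_j alpha j ^+ 2 * \sum_S sample_prob P S * fluct j S x y ^+ 2)
                    / marginal (P i) x.
Proof.
rewrite /expect expect_chi2 /chi2 -big_split /=; apply: eq_bigr => x _.
rewrite -big_split /=; apply: eq_bigr => y _; rewrite -mulrDl; congr (_ / _).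
under eq_bigr do rewrite residual_split.
apply: expect_sq_uncorrelated; first exact: sample_total.
  by move=> j; apply: fluct_centred.
by move=> j k; apply: fluct_uncorrelated.
Qed.

Lemma variance_sum :
  \sum_j alpha j ^+ 2 / (n j)%:R
           * ((n j)%:R * expect P (fun S => chi2 (P i) (qhat S j) (qbar j)))
  = \sum_x \sum_y (\sum_j alpha j ^+ 2 * \sum_S sample_prob P S * fluct j S x y ^+ 2)
                  / marginal (P i) x.
Proof.
have term j : alpha j ^+ 2 / (n j)%:R
                * ((n j)%:R * expect P (fun S => chi2 (P i) (qhat S j) (qbar j)))
   = alpha j ^+ 2 * \sum_x \sum_y (\sum_S sample_prob P S * fluct j S x y ^+ 2)
                                   / marginal (P i) x.
  rewrite mulrA mulfVK ?pnatr_eq0 -?lt0n ?n_gt0 // /expect expect_chi2.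
  congr (_ * _); apply: eq_bigr => x _; apply: eq_bigr => y _; congr (_ / _).
  by apply: eq_bigr => S _; rewrite /fluct -opprB sqrrN.
rewrite (eq_bigr _ (fun j _ => term j)).
under eq_bigr do rewrite mulr_sumr.
rewrite exchange_big; apply: eq_bigr => x _ /=.
under eq_bigr do rewrite mulr_sumr.
rewrite exchange_big; apply: eq_bigr => y _ /=.
by rewrite mulr_suml; apply: eq_bigr => j _; rewrite mulrA.
Qed.

Lemma mixture_orthogonal :
  \sum_x \sum_y (P i x y - qbar i x y) * (qbar i x y - qmix x y) / marginal (P i) x = 0.
Proof.
pose h y := gbar i y - \sum_j alpha j *: gbar j y.
transitivity (#|Y|%:R^-1 * \sum_x \sum_y (P i x y - qbar i x y) * dotv (f x) (h y));
  last by rewrite bias_orthogonal mulr0.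
rewrite mulr_sumr; apply: eq_bigr => x _; rewrite mulr_sumr; apply: eq_bigr => y _.
rewrite /qmix -(PXQ_affine f PX (c := alpha) gbar) // /qbar PXQ_diff P_marginal.
have Y_gt0 : (0 < #|Y|)%N by apply/card_gt0P; exists y.
by field; rewrite pnatr_eq0 -lt0n Y_gt0 gt_eqF.
Qed.

End Federated.

Theorem theorem1 (R : realType) (X Y : finType) (d m : nat)
  (f : X -> 'rV[R]_d) (PX : X -> R) (P : 'I_m -> X -> Y -> R) (n : 'I_m -> nat)
  (ghat : sample_space X Y n -> 'I_m -> Y -> 'rV[R]_d)
  (i : 'I_m) (alpha : 'I_m -> R) :
  (forall j x y, 0 <= P j x y) ->
  (forall j, \sum_(x : X) \sum_(y : Y) P j x y = 1) ->
  (forall j x, marginal (P j) x = PX x) ->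
  (forall x, 0 < PX x) ->
  \sum_(x : X) PX x *: f x = 0 ->
  (\sum_(x : X) PX x *: ((f x)^T *m f x)) \in unitmx ->
  (forall j, (0 < n j)%N) ->
  (forall (S : sample_space X Y n) (j : 'I_m) (g : Y -> 'rV[R]_d),
     chi2 (P j) (@emp_dist R X Y (n j) (S j)) (PXQ PX f (ghat S j))
       <= chi2 (P j) (@emp_dist R X Y (n j) (S j)) (PXQ PX f g)) ->
  \sum_(j < m) alpha j = 1 ->
  let gbar := fun j y => expect_vec P (fun S => ghat S j y) in
  let ghat_star := fun S y => \sum_(j < m) alpha j *: ghat S j y in
  let Ri := expect P (fun S => chi2 (P i) (P i) (PXQ PX f (ghat_star S))) in
  let V := fun j => (n j)%:R *
      expect P (fun S => chi2 (P i) (PXQ PX f (ghat S j)) (PXQ PX f (gbar j))) in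
  Ri = chi2 (P i) (PXQ PX f (gbar i))
                  (fun x y => \sum_(j < m) alpha j * PXQ PX f (gbar j) x y)
       + \sum_(j < m) (alpha j ^+ 2 / (n j)%:R) * V j
       + chi2 (P i) (P i) (PXQ PX f (gbar i)).
Proof.
move=> _ P_total P_marginal PX_gt0 _ Lambda_unit n_gt0 ghat_min alpha_total.
move=> gbar ghat_star Ri V; rewrite /Ri /V /ghat_star /gbar.
rewrite (expected_risk P_total P_marginal PX_gt0 Lambda_unit ghat_min i alpha_total).
rewrite (chi2_pythagoras (mixture_orthogonal P_total P_marginal PX_gt0 n_gt0 ghat_min i alpha_total)).
rewrite -(variance_sum f PX P ghat n_gt0 i alpha).
by rewrite -addrA addrC.
Qed.
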